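(* Let $G=(U\sqcup V,E)$ be an undirected bipartite graph with parts $U$ and $V$, $|U|=|V|=r\ge 2$. Assume that for any distinct $u,u'\in U$ and any distinct $v,v'\in V$, the number of edges of $G$ with both endpoints in $\{u,u',v,v'\}$ is not equal to $1$. Then for every vertex $x\in U\sqcup V$ with positive degree in the bipartite complement $\overline{G}$, the connected component of $\overline{G}$ containing $x$ is a complete bipartite graph with partition classes $U\cap W$ and $V\cap W$, where $W$ is the vertex set of that component.
   Context: The bipartite complement of a bipartite graph $G=(U\sqcup V,E)$ is $\overline{G}=(U\sqcup V,\overline{E})$ with $\overline{E}=\{\{u,v\}:u\in U,v\in V,\{u,v\}\notin E\}$. *)

From mathcomp Require Import all_boot all_order.
Set Implicit Arguments. Unset Strict Implicit. Unset Printing Implicit Defensive.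

(* The vertex set is the sum type U + V (inl = part U, inr = part V). *)

Definition badj (U V : finType) (E : U -> V -> bool) : rel (U + V) :=
  fun a b => match a, b with
             | inl u, inr v => E u v
             | inr v, inl u => E u v
             | _, _ => false
             end.

Definition bcompl_adj (U V : finType) (E : U -> V -> bool) : rel (U + V) :=
  fun a b => match a, b with
             | inl u, inr v => ~~ E u v
             | inr v, inl u => ~~ E u v
             | _, _ => false
             end.

Definition bcompl_deg (U V : finType) (E : U -> V -> bool) (x : U + V) : nat :=
  #|[set y | bcompl_adj E x y]|.

Definition bcompl_comp (U V : finType) (E : U -> V -> bool) (x : U + V)
  : {set U + V} := [set y | connect (bcompl_adj E) x y].

Definition opp_sides (U V : finType) (a b : U + V) : bool :=
  match a, b with
  | inl _, inr _ | inr _, inl _ => true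
  | _, _ => false
  end.

(* Number of edges of G with both endpoints in {u,u',v,v'} (u ≠ u', v ≠ v'). *)
Definition edges4 (U V : finType) (E : U -> V -> bool) u u' v v' : nat :=
  (E u v + E u v' + E u' v + E u' v')%N.

From mathcomp Require Import all_boot all_order.

(* In the complement, the hypothesis says that three non-edges u v, v u', u' v'
   (u <> u', v <> v') force the fourth non-edge u v': a path on three edges
   of the complement closes into a 4-cycle.  Walking along a path of the
   complement one therefore keeps the invariant that the current vertex is
   adjacent to the start when the two lie on opposite sides, and equals it or
   shares a neighbour with it otherwise. *)

Set Implicit Arguments.
Unset Strict Implicit.
Unset Printing Implicit Defensive.

Section BipartiteComplement.

Variables (U V : finType) (E : U -> V -> bool).

Local Notation adj := (bcompl_adj E).

Lemma bcompl_adjC : symmetric adj.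
Proof. by case=> a; case. Qed.

Lemma bcompl_adj_opp a b : adj a b -> opp_sides a b.
Proof. by case: a => a; case: b. Qed.

Hypothesis edges4_neq1 :
  forall (u u' : U) (v v' : V), u != u' -> v != v' -> edges4 E u u' v v' != 1.

Lemma nonedge_close (u u' : U) (v v' : V) : u != u' -> v != v' ->
  ~~ E u v -> ~~ E u' v -> ~~ E u' v' -> ~~ E u v'.
Proof.
move=> uu' vv' /negbTE Euv /negbTE Eu'v /negbTE Eu'v'; apply/negP => Euv'.
by have := edges4_neq1 uu' vv'; rewrite /edges4 Euv Eu'v Eu'v' Euv'.
Qed.

Lemma bcompl_adj_path3 a c d b :
  adj a c -> adj c d -> adj d b -> a != d -> c != b -> adj a b.
Proof.
case: a => a; case: c => c //; case: d => d //; case: b => b //= ac cd db ad cb.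
- apply: (nonedge_close _ _ ac cd db).
    by apply: contraNneq ad => ->.
  by apply: contraNneq cb => ->.
- apply: (nonedge_close _ _ db cd ac).
    by apply: contraNneq cb => ->.
  by apply: contraNneq ad => ->.
Qed.

Definition bcompl_near a b : bool :=
  if opp_sides a b then adj a b else (a == b) || [exists c, adj a c && adj c b].

Lemma bcompl_near_refl : reflexive bcompl_near.
Proof. by move=> a; rewrite /bcompl_near eqxx; case: a. Qed.

Lemma opp_sides_adjl a c b : adj a c -> opp_sides a b = ~~ opp_sides c b.
Proof. by case: a => a; case: c => c; case: b. Qed.

Lemma bcompl_near_adjl a c b : adj a c -> bcompl_near c b -> bcompl_near a b.
Proof.
move=> ac; rewrite /bcompl_near (opp_sides_adjl b ac).
case: (opp_sides c b) => /=.
  by move=> cb; apply/orP; right; apply/existsP; exists c; rewrite ac.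
case/orP=> [/eqP <- // | /existsP[d /andP[cd db]]].
have [-> // | ad] := eqVneq a d.
have [<- // | cb] := eqVneq c b.
exact: bcompl_adj_path3 ac cd db ad cb.
Qed.

Lemma connect_bcompl_near a b : connect adj a b -> bcompl_near a b.
Proof.
move=> /connectP[p + ->] {b}; elim: p a => [|c p IHp] a /=.
  by rewrite bcompl_near_refl.
by move=> /andP[ac pc]; apply: bcompl_near_adjl ac (IHp c pc).
Qed.

Lemma connect_bcompl_adj a b : connect adj a b -> adj a b = opp_sides a b.
Proof.
move/connect_bcompl_near; rewrite /bcompl_near; case: ifP => [_ -> // | ab _].
by apply/negbTE/negP => /bcompl_adj_opp; rewrite ab.
Qed.

End BipartiteComplement.

Theorem proposition7 (U V : finType) (E : U -> V -> bool) (r : nat) :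
  #|U| = r -> #|V| = r -> 2 <= r ->
  (forall (u u' : U) (v v' : V), u != u' -> v != v' -> edges4 E u u' v v' != 1) ->
  forall x : U + V, 0 < bcompl_deg E x ->
    (* the induced subgraph of the complement on W = component of x is the
       complete bipartite graph with classes U ∩ W and V ∩ W *)
    forall y z : U + V, y \in bcompl_comp E x -> z \in bcompl_comp E x ->
      bcompl_adj E y z = opp_sides y z.
Proof.
move=> _ _ _ edges4_neq1 x _ y z; rewrite !inE => xy xz.
have sym_connect : connect_sym (bcompl_adj E).
  exact/sym_connect_sym/bcompl_adjC.
apply: (connect_bcompl_adj edges4_neq1).
by apply: connect_trans xz; rewrite sym_connect.
Qed.
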